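(* Let $F$ be a Fano manifold of Fano index $r$. Suppose that $F$ admits a weak Landau--Ginzburg model $f(x)\in\mathbb{C}[x_1^{\pm1},\dots,x_m^{\pm1}]$ all of whose coefficients are non-negative real numbers, and suppose that $\mathrm{Const}(f^{rn})\neq 0$ for all but finitely many $n\in\mathbb{Z}_{\ge0}$. Then the coefficients $G_n$ of the quantum period of $F$ are non-negative real numbers and the limit \[ \lim_{n\to\infty}\sqrt[rn]{(rn)!\,|G_{rn}|}=\lim_{n\to\infty}\sqrt[rn]{\mathrm{Const}(f^{rn})} \] exists.
   Context: For a Fano manifold $F$, the Fano index $r$ is the largest integer $r>0$ such that $c_1(F)/r$ is an integral class. The $J$-function of $F$ is the cohomology-valued (multivalued) function $J_F(t)=e^{c_1(F)\log t}\bigl(1+\sum_{i}\sum_{0\ne d\in H_2(F,\mathbb{Z})}\langle \phi_i/(1-\psi)\rangle_{0,1,d}\,\phi^i\,t^{c_1(F)\cdot d}\bigr)$, where $\{\phi_i\}$ is a basis of $H^{\mathrm{even}}(F)$, $\{\phi^i\}$ the Poincaré dual basis, and $\langle\cdot\rangle_{0,1,d}$ are genus-zero one-point descendant Gromov--Witten invariants ($\psi$ the cotangent line class). The quantum period of $F$ is $G_F(t)=\langle[\mathrm{pt}],J_F(t)\rangle=\sum_{n\ge0}G_nt^n$. For a Laurent polynomial $g$, $\mathrm{Const}(g)$ denotes its constant term. A Laurent polynomial $f$ is a weak Landau--Ginzburg model of $F$ if $G_F(t)=\sum_{n\ge0}\frac{1}{n!}\mathrm{Const}(f^n)t^n$.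 *)

From Stdlib Require Import Reals Lra Lia ZArith List.
Import ListNotations.
Open Scope R_scope.

(* A Laurent polynomial in m variables x_1..x_m with real coefficients is
   represented as a finite list of monomials (c, e), meaning the sum of
   c * x^e, where e : list Z is the exponent vector (of length m).
   Repeated exponents are allowed; their coefficients simply add up. *)
Definition monomial := (R * list Z)%type.
Definition laurent := list monomial.

Definition well_formed (m : nat) (f : laurent) : Prop :=
  forall c e, In (c, e) f -> length e = m.

Definition nonneg_coeffs (f : laurent) : Prop :=
  forall c e, In (c, e) f -> 0 <= c.

Definition vsub (v e : list Z) : list Z := map (fun p => (fst p - snd p)%Z) (combine v e).

(* coeff_pow f n v = coefficient of x^v in f^n. *)
Fixpoint coeff_pow (f : laurent) (n : nat) (v : list Z) : R :=
  match n with
  | O => if list_eq_dec Z.eq_dec v (repeat 0%Z (length v)) then 1 else 0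
  | S k => fold_right Rplus 0
             (map (fun ce => fst ce * coeff_pow f k (vsub v (snd ce))) f)
  end.

Definition Const_pow (m : nat) (f : laurent) (n : nat) : R :=
  coeff_pow f n (repeat 0%Z m).

Definition nroot (k : nat) (x : R) : R :=
  if Rle_dec x 0 then 0 else Rpower x (/ INR k).

(* With non-negative coefficients, every coefficient of f^n is
   non-negative, so the coefficient of x^0 in f^(a+b) = f^a f^b is at least
   Const(f^a) Const(f^b).  Hence n |-> ln Const(f^(rn)) is superadditive
   (once the constant terms are positive) and bounded above by n ln T^r, where
   T is the sum of the coefficients, and Fekete's lemma makes
   ln Const(f^(rn)) / n converge.  Since (rn)! |G_(rn)| = Const(f^(rn)), both
   sequences of roots are the same sequence. *)
From Stdlib Require Import Reals List Arith Factorial Lra Lia Classical_Prop.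
Open Scope R_scope.

Lemma sum_map_le {A} (l : list A) (g h : A -> R) :
  (forall x, In x l -> g x <= h x) ->
  fold_right Rplus 0 (map g l) <= fold_right Rplus 0 (map h l).
Proof.
  induction l as [|a l IH]; simpl; intros H; [lra|].
  apply Rplus_le_compat; [apply H; auto | apply IH; auto].
Qed.

Lemma sum_map_nonneg {A} (l : list A) (g : A -> R) :
  (forall x, In x l -> 0 <= g x) -> 0 <= fold_right Rplus 0 (map g l).
Proof.
  induction l as [|a l IH]; simpl; intros H; [lra|].
  apply Rplus_le_le_0_compat; [apply H; auto | apply IH; auto].
Qed.

Lemma sum_map_scal {A} (l : list A) (g : A -> R) k :
  fold_right Rplus 0 (map (fun x => k * g x) l) = k * fold_right Rplus 0 (map g l).
Proof. induction l; simpl; [ring | rewrite IHl; ring]. Qed.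

Lemma vsubAC v e u : vsub (vsub v e) u = vsub (vsub v u) e.
Proof.
  revert e u; induction v as [|a v IH]; intros [|b e] [|c u]; simpl; auto.
  unfold vsub in *; simpl; f_equal; [lia | apply IH].
Qed.

Lemma length_vsub v e : length (vsub v e) = Nat.min (length v) (length e).
Proof. unfold vsub; rewrite length_map, length_combine; auto. Qed.

Lemma vsub_eq0 v u : length v = length u ->
  vsub v u = repeat 0%Z (length (vsub v u)) -> v = u.
Proof.
  revert u; induction v as [|a v IH]; intros [|b u]; simpl; intros Hl H;
    try discriminate; auto.
  unfold vsub in H; simpl in H; injection H as H1 H2.
  f_equal; [lia | apply IH; auto].
Qed.

Lemma vsub_zero m : vsub (repeat 0%Z m) (repeat 0%Z m) = repeat 0%Z m.
Proof. induction m; simpl; auto; unfold vsub in *; simpl; rewrite IHm; auto. Qed.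

Section LaurentCoefficients.
Variables (m : nat) (f : laurent).
Hypothesis f_wf : well_formed m f.
Hypothesis f_nn : nonneg_coeffs f.

Lemma coeff_pow_ge0 n v : 0 <= coeff_pow f n v.
Proof.
  revert v; induction n as [|n IH]; intros v; simpl.
  - destruct list_eq_dec; lra.
  - apply sum_map_nonneg; intros [c e] Hin; simpl.
    apply Rmult_le_pos; [eapply f_nn; eauto | apply IH].
Qed.

(* Keeping only the products x^(v-u) * x^u in f^(a+b) = f^a f^b; the other
   products contribute non-negatively. *)
Lemma coeff_pow_mul_le a b v u : length v = m -> length u = m ->
  coeff_pow f a (vsub v u) * coeff_pow f b u <= coeff_pow f (a + b) v.
Proof.
  revert v; induction a as [|a IH]; intros v Hv Hu; simpl.
  - destruct list_eq_dec as [E|E].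
    + apply vsub_eq0 in E; [subst; lra | lia].
    + rewrite Rmult_0_l; apply coeff_pow_ge0.
  - rewrite Rmult_comm, <- sum_map_scal.
    apply sum_map_le; intros [c e] Hin; simpl; rewrite <- vsubAC.
    assert (Hve : length (vsub v e) = m) by (rewrite length_vsub, (f_wf c e Hin); lia).
    specialize (IH (vsub v e) Hve Hu).
    assert (0 <= c) by (eapply f_nn; eauto).
    pose proof (coeff_pow_ge0 b u); nra.
Qed.

Lemma Const_pow_mul_le a b :
  Const_pow m f a * Const_pow m f b <= Const_pow m f (a + b).
Proof.
  unfold Const_pow; rewrite <- (vsub_zero m) at 1.
  apply coeff_pow_mul_le; apply repeat_length.
Qed.

Definition coeff_sum : R := fold_right Rplus 0 (map fst f).

Lemma coeff_pow_le_coeff_sum n v : coeff_pow f n v <= coeff_sum ^ n.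
Proof.
  revert v; induction n as [|n IH]; intros v; simpl.
  - destruct list_eq_dec; lra.
  - unfold coeff_sum at 1; rewrite Rmult_comm, <- sum_map_scal.
    apply sum_map_le; intros [c e] Hin; simpl.
    assert (0 <= c) by (eapply f_nn; eauto).
    specialize (IH (vsub v e)); nra.
Qed.

End LaurentCoefficients.

Lemma Un_cv_eventually_ext (u v : nat -> R) L N :
  (forall n, (N <= n)%nat -> u n = v n) -> Un_cv u L -> Un_cv v L.
Proof.
  intros Huv H eps Heps; destruct (H eps Heps) as [N1 HN1].
  exists (Nat.max N N1); intros n Hn; rewrite <- Huv by lia; apply HN1; lia.
Qed.

Lemma lower_bound_below (g : nat -> R) K : exists M, forall s, (s < K)%nat -> M <= g s.
Proof.
  induction K as [|K [M HM]].
  - exists 0; intros; lia.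
  - exists (Rmin M (g K)); intros s Hs.
    destruct (Nat.eq_dec s K) as [->|]; [apply Rmin_r|].
    apply Rle_trans with M; [apply Rmin_l | apply HM; lia].
Qed.

Lemma div_INR_eventually_lt C eps : 0 <= C -> 0 < eps ->
  exists n0, forall n, (n0 <= n)%nat -> C / INR n < eps.
Proof.
  intros HC Heps.
  destruct (archimed_cor1 (eps / (C + 1))) as [n0 [Hn0 Hn0p]];
    [apply Rdiv_lt_0_compat; lra|].
  exists n0; intros n Hn.
  assert (Hle : INR n0 <= INR n) by (apply le_INR; lia).
  assert (Hpos : 0 < INR n0) by (apply lt_0_INR; lia).
  apply Rle_lt_trans with ((C + 1) * / INR n0).
  - apply Rmult_le_compat; try lra; [left; apply Rinv_0_lt_compat; lra|].
    apply Rinv_le_contravar; lra.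
  - apply Rmult_lt_reg_l with (/ (C + 1)); [apply Rinv_0_lt_compat; lra|].
    rewrite <- Rmult_assoc, Rinv_l, Rmult_1_l by lra.
    replace (/ (C + 1) * eps) with (eps / (C + 1)) by (unfold Rdiv; ring); exact Hn0.
Qed.

Section Fekete.
Variables (l : nat -> R) (N : nat) (B : R).
Hypothesis N_ge1 : (1 <= N)%nat.
Hypothesis l_superadd : forall n k, (N <= n)%nat -> (N <= k)%nat -> l n + l k <= l (n + k)%nat.
Hypothesis l_bounded : forall n, (N <= n)%nat -> l n <= INR n * B.

Lemma superadd_iter k q s : (N <= k)%nat -> (N <= s)%nat ->
  INR q * l k + l s <= l (q * k + s)%nat.
Proof.
  intros Hk Hs; induction q as [|q IH]; [simpl; lra|].
  rewrite S_INR; replace (S q * k + s)%nat with (k + (q * k + s))%nat by lia.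
  eapply Rle_trans; [|apply l_superadd; lia]; lra.
Qed.

(* Write n - N = q k + rem with rem < k: then l n >= q l k + l (N + rem), and
   the finitely many values l (N + rem) are bounded below. *)
Lemma superadd_ratio_lower_bound k : (N <= k)%nat ->
  exists C, 0 <= C /\
    forall n, (N <= n)%nat -> l k / INR k - C / INR n <= l n / INR n.
Proof.
  intros Hk.
  destruct (lower_bound_below l (N + k)) as [M HM].
  set (y := l k / INR k).
  exists (INR (N + k) * Rabs y + Rabs M); split.
  { pose proof (pos_INR (N + k)); pose proof (Rabs_pos y); pose proof (Rabs_pos M); nra. }
  intros n Hn.
  assert (Hk0 : k <> 0%nat) by lia.
  set (q := ((n - N) / k)%nat); set (s := (N + (n - N) mod k)%nat).
  assert (Hn_eq : n = (q * k + s)%nat)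
    by (unfold q, s; pose proof (Nat.div_mod (n - N) k Hk0); lia).
  assert (Hs : (N <= s < N + k)%nat)
    by (unfold s; pose proof (Nat.mod_upper_bound (n - N) k Hk0); lia).
  assert (Hln : INR q * l k + M <= l n).
  { rewrite Hn_eq; eapply Rle_trans; [|apply superadd_iter; lia].
    pose proof (HM s ltac:(lia)); lra. }
  assert (Hnk : INR n * y = INR q * l k + INR s * y).
  { rewrite Hn_eq, plus_INR, mult_INR; unfold y; field; apply not_0_INR; lia. }
  assert (Hsy : INR s * y <= INR (N + k) * Rabs y).
  { eapply Rle_trans; [apply Rmult_le_compat_l; [apply pos_INR | apply Rle_abs]|].
    apply Rmult_le_compat_r; [apply Rabs_pos | apply le_INR; lia]. }
  pose proof (Rle_abs (- M)); rewrite Rabs_Ropp in *.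
  assert (Hnpos : 0 < INR n) by (apply lt_0_INR; lia).
  apply Rmult_le_reg_r with (INR n); [exact Hnpos|].
  unfold Rdiv; rewrite Rmult_minus_distr_r, !Rmult_assoc, Rinv_l, !Rmult_1_r by lra.
  fold y; lra.
Qed.

Lemma fekete : exists L, Un_cv (fun n => l n / INR n) L.
Proof.
  set (E := fun x => exists n, (N <= n)%nat /\ x = l n / INR n).
  assert (HE_bound : bound E).
  { exists B; intros x [n [Hn ->]].
    apply Rmult_le_reg_r with (INR n); [apply lt_0_INR; lia|].
    unfold Rdiv; rewrite Rmult_assoc, Rinv_l, Rmult_1_r by (apply not_0_INR; lia).
    rewrite Rmult_comm; apply l_bounded; exact Hn. }
  destruct (completeness E HE_bound ltac:(exists (l N / INR N), N; auto))
    as [L [HL_ub HL_least]].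
  exists L; intros eps Heps.
  assert (Hk : exists k, (N <= k)%nat /\ L - eps / 2 < l k / INR k).
  { apply NNPP; intros Hno.
    enough (L <= L - eps / 2) by lra.
    apply HL_least; intros x [n [Hn ->]].
    apply Rnot_lt_le; intros Hc; apply Hno; exists n; auto. }
  destruct Hk as [k [Hk Hyk]].
  destruct (superadd_ratio_lower_bound k Hk) as [C [HC HlowC]].
  destruct (div_INR_eventually_lt C (eps / 2) HC ltac:(lra)) as [n0 Hn0].
  exists (Nat.max N n0); intros n Hn; unfold R_dist.
  assert (l n / INR n <= L) by (apply HL_ub; exists n; split; auto; lia).
  pose proof (HlowC n ltac:(lia)); pose proof (Hn0 n ltac:(lia)).
  rewrite Rabs_left1 by lra; lra.
Qed.

End Fekete.

Lemma supermul_root_cv (a : nat -> R) (r N : nat) (B : R) :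
  (0 < r)%nat -> (1 <= N)%nat -> 0 <= B ->
  (forall n, (N <= n)%nat -> 0 < a n) ->
  (forall n k, a n * a k <= a (n + k)%nat) ->
  (forall n, a n <= B ^ n) ->
  exists L, Un_cv (fun n => nroot (r * n)%nat (a n)) L.
Proof.
  intros Hr HN HB0 Hpos Hsupermul Hbound.
  assert (HB : 0 < B).
  { destruct HB0 as [|HB0]; auto; subst B.
    pose proof (Hbound N); pose proof (Hpos N (le_n N)).
    rewrite pow_i in * by lia; lra. }
  destruct (fekete (fun n => ln (a n)) N (ln B)) as [L HL].
  - exact HN.
  - intros n k Hn Hk; rewrite <- ln_mult by auto.
    destruct (Rle_lt_or_eq _ _ (Hsupermul n k)) as [Hlt| ->]; [|lra].
    left; apply ln_increasing; [apply Rmult_lt_0_compat; auto | exact Hlt].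
  - intros n Hn; rewrite <- ln_pow by exact HB.
    destruct (Rle_lt_or_eq _ _ (Hbound n)) as [Hlt| ->]; [|lra].
    left; apply ln_increasing; auto.
  - exists (exp (L / INR r)).
    apply Un_cv_eventually_ext with (fun n => exp (ln (a n) / INR n / INR r)) N.
    + intros n Hn; unfold nroot; destruct Rle_dec as [h|_]; [pose proof (Hpos n Hn); lra|].
      unfold Rpower; f_equal; rewrite mult_INR; field.
      split; apply not_0_INR; lia.
    + apply (continuity_seq (fun x => exp (x / INR r))); auto.
      apply derivable_continuous_pt; reg.
Qed.

Lemma coeff_sum_ge0 (f : laurent) : nonneg_coeffs f -> 0 <= coeff_sum f.
Proof.
  intros f_nn; apply sum_map_nonneg; intros [c e] Hin; exact (f_nn c e Hin).
Qed.

Theorem mainTheorem1 (r m : nat) (f : laurent) (G : nat -> R) :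
  (0 < r)%nat ->
  well_formed m f ->
  nonneg_coeffs f ->
  (forall n, G n = Const_pow m f n / INR (fact n)) ->
  (exists N, forall n, (N <= n)%nat -> Const_pow m f (r * n)%nat <> 0) ->
  (forall n, 0 <= G n) /\
  exists L : R,
    Un_cv (fun n => nroot (r * n)%nat (INR (fact (r * n)%nat) * Rabs (G (r * n)%nat))) L /\
    Un_cv (fun n => nroot (r * n)%nat (Const_pow m f (r * n)%nat)) L.
Proof.
  intros Hr f_wf f_nn HG [N HN].
  assert (HG_ge0 : forall n, 0 <= G n).
  { intros n; rewrite HG; apply Rmult_le_pos; [apply coeff_pow_ge0; exact f_nn|].
    left; apply Rinv_0_lt_compat, lt_0_INR, lt_O_fact. }
  assert (HG_Const : forall n, INR (fact n) * Rabs (G n) = Const_pow m f n).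
  { intros n; rewrite Rabs_right, HG by (apply Rle_ge; auto).
    field; apply not_0_INR, fact_neq_0. }
  split; [exact HG_ge0|].
  destruct (supermul_root_cv (fun n => Const_pow m f (r * n)) r (S N) (coeff_sum f ^ r))
    as [L HL]; auto with arith.
  - apply pow_le, coeff_sum_ge0; exact f_nn.
  - intros n Hn; destruct (coeff_pow_ge0 f f_nn (r * n) (repeat 0%Z m)) as [h|h]; auto.
    exfalso; apply (HN n); [lia | symmetry; exact h].
  - intros n k; rewrite Nat.mul_add_distr_l; apply Const_pow_mul_le; assumption.
  - intros n; rewrite <- pow_mult; apply coeff_pow_le_coeff_sum; exact f_nn.
  - exists L; split; [|exact HL].
    apply Un_cv_ext with (fun n => nroot (r * n) (Const_pow m f (r * n))); [|exact HL].
    intros n; rewrite HG_Const; reflexivity.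
Qed.
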